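(* Consider robust dynamic pricing with horizon $T$, valuation $v^\star\in[0,1)$, and feedback corrupted in at most $C$ rounds, where $C$ is known to the learner. The meta-algorithm described in the context, with the commitment subroutine \textsc{CommitKnown}, guarantees \[ R_T\le \mathcal O(C+\log T), \] with a hidden constant independent of $T$, $C$, $v^\star$ and the adversary.
   Context: Robust dynamic pricing: there are $T$ rounds and an unknown valuation $v^\star\in[0,1)$. At each round $t$ the seller posts a price $p_t\in[0,1]$. The true sale indicator is $y_t=\mathbbm 1\{p_t\le v^\star\}$; the seller observes $\sigma_t\in\{0,1\}$, and at most $C$ rounds are corrupted: $|\{t\in[T]:\sigma_t\neq y_t\}|\le C$. The adversary decides whether to corrupt round $t$ based on the history and on the seller's distribution over $p_t$, but not on the realized $p_t$ (how it corrupts may depend on the realized price). Revenue is $r_t=p_t\,\mathbbm 1\{p_t\le v^\star\}$ and regret is $R_T=Tv^\star-\sum_{t=1}^T r_t$. $\log$ is base $2$. Meta-algorithm: let $D=\lceil\log_2 T\rceil$. Consider the complete binary tree of intervals of depth $D$ with root $[0,1)$, where each non-leaf node $[L,R)$ has children $[L,M)$ and $[M,R)$, $M=(L+R)/2$; the depth-$D$ nodes are the leaves (each of length at most $1/T$). The algorithm keeps a current node $I$, initially the root, and repeats until the horizon ends: if $I=[L,R)$ is not a leaf, it performs a safety check — post $L$ and observe $\sigma_L$, post $R$ and observe $\sigma_R$; the check fails if $\sigma_L=0$ or $\sigma_R=1$ (by convention the query at $L=0$ and the query at $R=1$ always count as passing). On failure $I$ becomes its parent; otherwise it posts $M$, observes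 $\sigma_M$, and $I$ becomes $[M,R)$ if $\sigma_M=1$ and $[L,M)$ if $\sigma_M=0$. If $I$ is a leaf, the commitment subroutine is run on $I$; if it returns FAIL, $I$ becomes its parent. \textsc{CommitKnown}: each leaf $\ell$ has a counter $s_\ell$, initialized to $0$ at the start of the horizon and shared across all calls. On leaf $\ell=[L,R)$ it repeats: if $s_\ell\le C$, post $L$ and observe $\sigma_L$, post $R$ and observe $\sigma_R$; if $\sigma_L=0$ or $\sigma_R=1$, return FAIL, else increase $s_\ell$ by $1$. If $s_\ell>C$, post $L$ (and continue doing so). *)

From Stdlib Require Import Reals Lra Lia Arith List.
Import ListNotations.
Open Scope R_scope.

(** Robust dynamic pricing: the meta-algorithm with CommitKnown.
    A node of the dyadic tree is a pair (d, k) (depth d, index k < 2^d),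
    representing the interval [k/2^d, (k+1)/2^d). *)

Definition nodeL (d k : nat) : R := INR k / INR (2 ^ d).
Definition nodeR (d k : nat) : R := INR (S k) / INR (2 ^ d).
Definition nodeM (d k : nat) : R := INR (2 * k + 1) / INR (2 ^ (S d)).

(** NCheckL / NCheckR b / NMid : safety check and midpoint query at a non-leaf
      (b records whether the query at L passed).
    LCheckL / LCheckR b / LCommit : CommitKnown on a leaf. *)
Inductive phase : Type :=
| NCheckL | NCheckR (bL : bool) | NMid
| LCheckL | LCheckR (bL : bool) | LCommit.

Record state : Type := mkState {
  st_d : nat;
  st_k : nat;
  st_ph : phase;
  st_s : nat -> nat      (* leaf counters s_l (indexed by leaf index), shared across calls *)
}.

Definition depth (T : nat) : nat := Nat.log2_up T.

Definition enter (T C : nat) (d k : nat) (s : nat -> nat) : state :=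
  if Nat.ltb d (depth T) then mkState d k NCheckL s
  else if Nat.leb (s k) C then mkState d k LCheckL s
  else mkState d k LCommit s.

Definition init_state (T C : nat) : state := enter T C 0 0 (fun _ => 0%nat).

Definition to_parent (T C : nat) (st : state) : state :=
  enter T C (Nat.pred (st_d st)) (Nat.div2 (st_k st)) (st_s st).

Definition price (st : state) : R :=
  match st_ph st with
  | NCheckL | LCheckL | LCommit => nodeL (st_d st) (st_k st)
  | NCheckR _ | LCheckR _ => nodeR (st_d st) (st_k st)
  | NMid => nodeM (st_d st) (st_k st)
  end.

Definition passL (st : state) (sigma : bool) : bool :=
  orb (Nat.eqb (st_k st) 0) sigma.
Definition passR (st : state) (sigma : bool) : bool :=
  orb (Nat.eqb (S (st_k st)) (2 ^ st_d st)) (negb sigma).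

Definition incr (s : nat -> nat) (k : nat) : nat -> nat :=
  fun j => if Nat.eqb j k then S (s j) else s j.

Definition step (T C : nat) (st : state) (sigma : bool) : state :=
  let d := st_d st in let k := st_k st in let s := st_s st in
  match st_ph st with
  | NCheckL => mkState d k (NCheckR (passL st sigma)) s
  | NCheckR bL =>
      if andb bL (passR st sigma) then mkState d k NMid s
      else to_parent T C st
  | NMid =>
      if sigma then enter T C (S d) (2 * k + 1) s
      else enter T C (S d) (2 * k) s
  | LCheckL => mkState d k (LCheckR (passL st sigma)) s
  | LCheckR bL =>
      if andb bL (passR st sigma) then enter T C d k (incr s k)
      else to_parent T C st
  | LCommit => st
  end.

Definition sale (p v : R) : bool := if Rle_dec p v then true else false.

(** An adversary maps the history (list of (posted price, observed feedback),
    most recent first) and the current posted price to the observed feedback.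
    The algorithm is deterministic, so this covers adversaries that see the
    history and the (degenerate) distribution of the price. *)
Definition adversary : Type := list (R * bool) -> R -> bool.

Fixpoint run (T C : nat) (adv : adversary) (n : nat) : state * list (R * bool) :=
  match n with
  | O => (init_state T C, [])
  | S n' =>
      let (st, h) := run T C adv n' in
      let p := price st in
      let sigma := adv h p in
      (step T C st sigma, (p, sigma) :: h)
  end.

Definition history (T C : nat) (adv : adversary) : list (R * bool) :=
  snd (run T C adv T).

Definition corruptions (T C : nat) (v : R) (adv : adversary) : nat :=
  length (filter (fun ps => negb (Bool.eqb (snd ps) (sale (fst ps) v)))
                 (history T C adv)).

Definition revenue (T C : nat) (v : R) (adv : adversary) : R :=
  fold_right (fun ps acc => (if sale (fst ps) v then fst ps else 0) + acc) 0
             (history T C adv).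

Definition regret (T C : nat) (v : R) (adv : adversary) : R :=
  INR T * v - revenue T C v adv.

Definition log2R (x : R) : R := ln x / ln 2.

From Stdlib Require Import Reals Lra Lia List Bool.
Open Scope R_scope.

(* Let kg be the leaf containing v and D the depth of the tree. The potential of a node is
   5 * (number of levels to climb before reaching an interval containing v)
   + 3 * (D - depth) + 2 * (C + 1 - s_kg). A round with truthful feedback lowers it by at
   least 1, a corrupted round raises it by at most 5, and a round loses at most 1 in revenue;
   so the rounds before the commitment lose at most 3D + 2C + 2 + 6C. A leaf j <> kg reaches
   s_j > C only through C + 1 corrupted checks, hence the algorithm commits only to kg, where
   each round loses at most 2^-D <= 1/T. *)

Lemma pow2_pos d : 0 < 2 ^ d.
Proof. apply pow_lt; lra. Qed.

Lemma INR_pow2 d : INR (2 ^ d) = 2 ^ d.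
Proof. rewrite pow_INR; simpl INR; f_equal; lra. Qed.

Ltac dyadic_field :=
  unfold nodeL, nodeR, nodeM; rewrite ?INR_pow2, ?S_INR, ?plus_INR, ?mult_INR;
  simpl INR; simpl pow; field; apply pow_nonzero; lra.

Lemma nodeL_double d k : nodeL (S d) (2 * k) = nodeL d k.
Proof. dyadic_field. Qed.

Lemma nodeR_double d k : nodeR (S d) (2 * k) = nodeM d k.
Proof. dyadic_field. Qed.

Lemma nodeL_double_succ d k : nodeL (S d) (2 * k + 1) = nodeM d k.
Proof. dyadic_field. Qed.

Lemma nodeR_double_succ d k : nodeR (S d) (2 * k + 1) = nodeR d k.
Proof. dyadic_field. Qed.

Lemma nodeM_midpoint d k : nodeM d k = (nodeL d k + nodeR d k) / 2.
Proof. dyadic_field. Qed.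

Lemma nodeR_sub_nodeL d k : nodeR d k - nodeL d k = / 2 ^ d.
Proof. dyadic_field. Qed.

Lemma nodeL_lt_nodeR d k : nodeL d k < nodeR d k.
Proof.
  pose proof (nodeR_sub_nodeL d k). pose proof (Rinv_0_lt_compat _ (pow2_pos d)). lra.
Qed.

Lemma nodeL_first d : nodeL d 0 = 0.
Proof. unfold nodeL; simpl INR; lra. Qed.

Lemma nodeR_last d k : S k = (2 ^ d)%nat -> nodeR d k = 1.
Proof. intros E. unfold nodeR. rewrite E. field. rewrite INR_pow2. apply pow_nonzero; lra. Qed.

Lemma nodeL_nonneg d k : 0 <= nodeL d k.
Proof.
  unfold nodeL. rewrite INR_pow2. apply Rle_mult_inv_pos; [apply pos_INR | apply pow2_pos].
Qed.

Lemma price_nonneg st : 0 <= price st.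
Proof.
  pose proof (nodeL_nonneg (st_d st) (st_k st)). pose proof (nodeL_lt_nodeR (st_d st) (st_k st)).
  pose proof (nodeM_midpoint (st_d st) (st_k st)).
  unfold price; destruct (st_ph st); lra.
Qed.

Lemma sale_spec p v : reflect (p <= v) (sale p v).
Proof. unfold sale; destruct (Rle_dec p v); constructor; assumption. Qed.

Definition contains (v : R) (d k : nat) : bool :=
  sale (nodeL d k) v && negb (sale (nodeR d k) v).

Lemma contains_iff v d k : contains v d k = true <-> nodeL d k <= v < nodeR d k.
Proof.
  unfold contains.
  destruct (sale_spec (nodeL d k) v), (sale_spec (nodeR d k) v); simpl;
    split; intros; try discriminate; try reflexivity; lra.
Qed.

Lemma passL_truthful v d k ph s : 0 <= v ->
  passL (mkState d k ph s) (sale (nodeL d k) v) = sale (nodeL d k) v.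
Proof.
  intros Hv. unfold passL; cbn [st_k st_d].
  destruct (Nat.eqb_spec k 0) as [->|_]; [|reflexivity].
  rewrite nodeL_first. destruct (sale_spec 0 v); [reflexivity | lra].
Qed.

Lemma passR_truthful v d k ph s : v < 1 ->
  passR (mkState d k ph s) (sale (nodeR d k) v) = negb (sale (nodeR d k) v).
Proof.
  intros Hv. unfold passR; cbn [st_k st_d].
  destruct (Nat.eqb_spec (S k) (2 ^ d)) as [E|_]; [|reflexivity].
  rewrite (nodeR_last d k E). destruct (sale_spec 1 v); [lra | reflexivity].
Qed.

Lemma div2_cases c : c = (2 * Nat.div2 c)%nat \/ c = (2 * Nat.div2 c + 1)%nat.
Proof. pose proof (Nat.div2_odd c). destruct (Nat.odd c); simpl in *; lia. Qed.

Lemma div2_double_succ k : Nat.div2 (2 * k + 1) = k.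
Proof. rewrite Nat.add_1_r. apply Nat.div2_succ_double. Qed.

Lemma div2_lt_pow2 d k : (k < 2 ^ d)%nat -> (Nat.div2 k < 2 ^ Nat.pred d)%nat.
Proof.
  destruct d as [|d]; simpl Nat.pred.
  - simpl. intros Hk. replace k with 0%nat by lia. simpl. lia.
  - rewrite Nat.pow_succ_r'. destruct (div2_cases k); lia.
Qed.

Lemma contains_root v : 0 <= v < 1 -> contains v 0 0 = true.
Proof.
  intros Hv. apply contains_iff. rewrite nodeL_first, (nodeR_last 0 0) by reflexivity. lra.
Qed.

Lemma contains_parent v d c : contains v (S d) c = true -> contains v d (Nat.div2 c) = true.
Proof.
  rewrite !contains_iff. pose proof (nodeM_midpoint d (Nat.div2 c)).
  pose proof (nodeL_lt_nodeR d (Nat.div2 c)).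
  destruct (div2_cases c) as [E|E]; rewrite E at 1 2.
  - rewrite nodeL_double, nodeR_double. lra.
  - rewrite nodeL_double_succ, nodeR_double_succ. lra.
Qed.

Definition child_toward (v : R) (d k : nat) : nat :=
  if sale (nodeM d k) v then (2 * k + 1)%nat else (2 * k)%nat.

Lemma div2_child_toward v d k : Nat.div2 (child_toward v d k) = k.
Proof.
  unfold child_toward. destruct (sale _ _); [apply div2_double_succ | apply Nat.div2_double].
Qed.

Lemma child_toward_lt v d k : (k < 2 ^ d)%nat -> (child_toward v d k < 2 ^ S d)%nat.
Proof. rewrite Nat.pow_succ_r'. unfold child_toward; destruct (sale _ _); lia. Qed.

Lemma contains_child_toward v d k :
  contains v d k = true -> contains v (S d) (child_toward v d k) = true.
Proof.
  rewrite !contains_iff. unfold child_toward.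
  destruct (sale_spec (nodeM d k) v).
  - rewrite nodeL_double_succ, nodeR_double_succ. lra.
  - rewrite nodeL_double, nodeR_double. lra.
Qed.

Lemma contains_unique v d k k' :
  contains v d k = true -> contains v d k' = true -> k = k'.
Proof.
  rewrite !contains_iff. unfold nodeL, nodeR. rewrite INR_pow2, !S_INR.
  pose proof (pow2_pos d). intros [H1 H2] [H3 H4].
  apply Rmult_le_compat_r with (r := 2 ^ d) in H1, H3; [|lra..].
  apply Rmult_lt_compat_r with (r := 2 ^ d) in H2, H4; [|lra..].
  unfold Rdiv in *. rewrite Rmult_assoc, Rinv_l in H1, H2, H3, H4 by lra.
  assert (A : INR k < INR k' + 1) by lra. assert (B : INR k' < INR k + 1) by lra.
  rewrite <- S_INR in A, B. apply INR_lt in A, B. lia.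
Qed.

Lemma exists_containing_node v : 0 <= v < 1 ->
  forall d, exists k, (k < 2 ^ d)%nat /\ contains v d k = true.
Proof.
  intros Hv d. induction d as [|d [k [Hk Hc]]].
  - exists 0%nat. split; [simpl; lia | apply contains_root, Hv].
  - exists (child_toward v d k).
    split; [apply child_toward_lt | apply contains_child_toward]; assumption.
Qed.

Fixpoint climb (v : R) (d k : nat) : nat :=
  match d with
  | O => O
  | S d' => if contains v d k then O else S (climb v d' (Nat.div2 k))
  end.

Lemma climb_contains v d k : contains v d k = true -> climb v d k = 0%nat.
Proof. destruct d; simpl; intros H; [reflexivity | rewrite H; reflexivity]. Qed.

Lemma climb_not_contains v d k :
  contains v (S d) k = false -> climb v (S d) k = S (climb v d (Nat.div2 k)).
Proof. simpl. intros H. rewrite H. reflexivity. Qed.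

Definition corrupted (v : R) (ps : R * bool) : bool :=
  negb (Bool.eqb (snd ps) (sale (fst ps) v)).

Definition corr (v : R) (h : list (R * bool)) : nat := length (filter (corrupted v) h).

Lemma corr_cons v ps h : corr v (ps :: h) = (corr v h + Nat.b2n (corrupted v ps))%nat.
Proof. unfold corr; simpl. destruct (corrupted v ps); simpl; lia. Qed.

Definition round_loss (v p : R) : R := v - (if sale p v then p else 0).

Definition loss (v : R) (h : list (R * bool)) : R :=
  fold_right (fun ps acc => round_loss v (fst ps) + acc) 0 h.

Section Potential.

Variables (T C : nat) (v : R) (kg : nat).
Hypothesis Hv : 0 <= v < 1.
Hypothesis Hkg : contains v (depth T) kg = true.

(* Climbing out of a node that misses v lowers the potential by 5 - 3, descending towards v
   lowers it by 3, and a wrong move raises it by at most 3. *)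
Definition node_pot (d k : nat) (s : nat -> nat) : nat :=
  5 * climb v d k + 3 * (depth T - d) + 2 * (C + 1 - s kg).

Lemma node_pot_child d c s : (d < depth T)%nat ->
  (node_pot d (Nat.div2 c) s <= node_pot (S d) c s + 3 /\
   node_pot (S d) c s <= node_pot d (Nat.div2 c) s + 2)%nat.
Proof.
  intros Hd. unfold node_pot. destruct (contains v (S d) c) eqn:G.
  - rewrite (climb_contains _ _ _ G), (climb_contains _ _ _ (contains_parent _ _ _ G)). lia.
  - rewrite (climb_not_contains _ _ _ G). lia.
Qed.

Lemma node_pot_child_contains d c s : (d < depth T)%nat -> contains v (S d) c = true ->
  (node_pot (S d) c s + 3 = node_pot d (Nat.div2 c) s)%nat.
Proof.
  intros Hd G. unfold node_pot.
  rewrite (climb_contains _ _ _ G), (climb_contains _ _ _ (contains_parent _ _ _ G)). lia.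
Qed.

Lemma node_pot_parent d k s : (d <= depth T)%nat -> (k < 2 ^ d)%nat ->
  (node_pot d k s <= node_pot (Nat.pred d) (Nat.div2 k) s + 2 /\
   node_pot (Nat.pred d) (Nat.div2 k) s <= node_pot d k s + 3)%nat.
Proof.
  intros Hd Hk. destruct d as [|d].
  - simpl in Hk. replace k with 0%nat by lia. simpl. lia.
  - destruct (node_pot_child d k s) as [P1 P2]; simpl; lia.
Qed.

Lemma node_pot_parent_not_contains d k s : (d <= depth T)%nat -> (k < 2 ^ d)%nat ->
  contains v d k = false -> (node_pot (Nat.pred d) (Nat.div2 k) s + 2 = node_pot d k s)%nat.
Proof.
  intros Hd Hk G. destruct d as [|d].
  - simpl in Hk. replace k with 0%nat in G by lia. rewrite contains_root in G by exact Hv.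
    discriminate.
  - unfold node_pot. simpl Nat.pred. rewrite (climb_not_contains _ _ _ G). lia.
Qed.

Lemma node_pot_incr d k s : (node_pot d k (incr s k) <= node_pot d k s)%nat.
Proof. unfold node_pot, incr. destruct (Nat.eqb kg k); lia. Qed.

Lemma node_pot_incr_other d k s : k <> kg -> node_pot d k (incr s k) = node_pot d k s.
Proof. intros H. unfold node_pot, incr. destruct (Nat.eqb_spec kg k); [congruence | reflexivity]. Qed.

Lemma node_pot_incr_target d s : (s kg <= C)%nat ->
  (node_pot d kg (incr s kg) + 2 = node_pot d kg s)%nat.
Proof. intros H. unfold node_pot, incr. rewrite Nat.eqb_refl. lia. Qed.

(* Inside a node, the potential anticipates the node that truthful answers to the remaining
   queries lead to. *)
Definition pot (st : state) : nat :=
  let d := st_d st in let k := st_k st in let s := st_s st in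
  match st_ph st with
  | NCheckL | LCheckL => node_pot d k s
  | NCheckR b =>
      if b && negb (sale (nodeR d k) v) then 2 + node_pot (S d) (child_toward v d k) s
      else 1 + node_pot (Nat.pred d) (Nat.div2 k) s
  | NMid => 1 + node_pot (S d) (child_toward v d k) s
  | LCheckR b =>
      if b && negb (sale (nodeR d k) v) then
        (if sale (nodeL d k) v then node_pot d k s - 1 else node_pot d k s + 1)
      else 1 + node_pot (Nat.pred d) (Nat.div2 k) s
  | LCommit => 0
  end%nat.

Definition wf_state (st : state) : Prop :=
  (st_k st < 2 ^ st_d st)%nat /\
  match st_ph st with
  | NCheckL | NCheckR _ | NMid => (st_d st < depth T)%nat
  | LCheckL | LCheckR _ => st_d st = depth T /\ (st_s st (st_k st) <= C)%nat
  | LCommit => st_d st = depth T /\ (C < st_s st (st_k st))%nat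
  end.

Lemma enter_counters d k s : st_s (enter T C d k s) = s.
Proof. unfold enter. destruct (Nat.ltb d (depth T)); [|destruct (Nat.leb (s k) C)]; reflexivity. Qed.

Lemma wf_enter d k s : (d <= depth T)%nat -> (k < 2 ^ d)%nat -> wf_state (enter T C d k s).
Proof.
  intros Hd Hk. unfold enter, wf_state.
  destruct (Nat.ltb_spec d (depth T)); simpl; [auto|].
  destruct (Nat.leb_spec (s k) C); simpl; repeat split; auto; lia.
Qed.

Lemma pot_enter d k s : (pot (enter T C d k s) <= node_pot d k s)%nat.
Proof.
  unfold enter. destruct (Nat.ltb d (depth T)); [|destruct (Nat.leb (s k) C)]; unfold pot; simpl; lia.
Qed.

Lemma wf_step st sigma : wf_state st -> wf_state (step T C st sigma).
Proof.
  destruct st as [d k ph s]. intros [Hk Hph]; simpl in *.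
  assert (Hup : (Nat.div2 k < 2 ^ Nat.pred d)%nat) by (apply div2_lt_pow2, Hk).
  assert (Hdown : forall b : bool, ((if b then 2 * k + 1 else 2 * k) < 2 ^ S d)%nat)
    by (intros []; rewrite Nat.pow_succ_r'; lia).
  destruct ph; unfold step, to_parent; simpl.
  - split; assumption.
  - destruct (_ && _); [split; assumption | apply wf_enter; [lia | exact Hup]].
  - specialize (Hdown sigma). destruct sigma; apply wf_enter; lia.
  - split; assumption.
  - destruct (_ && _); apply wf_enter; [lia | exact Hk | lia | exact Hup].
  - split; assumption.
Qed.


Definition pot_drift (st : state) : Prop :=
  forall sigma,
    (pot (step T C st sigma) <= pot st + 5)%nat /\
    (sigma = sale (price st) v -> (pot (step T C st sigma) + 1 <= pot st)%nat).

Ltac bound_enter :=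
  repeat match goal with
  | |- context [pot (enter T C ?d ?k ?s)] =>
      let B := fresh "B" in let X := fresh "X" in
      pose proof (pot_enter d k s) as B;
      set (X := pot (enter T C d k s)) in *; clearbody X
  end.

Lemma pot_drift_NCheckL d k s : (d < depth T)%nat -> (k < 2 ^ d)%nat ->
  pot_drift (mkState d k NCheckL s).
Proof.
  intros Hd Hk sigma. unfold step, price, pot; cbn [st_d st_k st_ph st_s].
  destruct (node_pot_parent d k s) as [P1 P2]; [lia | exact Hk |].
  destruct (node_pot_child d (child_toward v d k) s Hd) as [C1 C2].
  rewrite div2_child_toward in C1, C2.
  split.
  - destruct (_ && _); lia.
  - intros ->. rewrite passL_truthful by apply Hv.
    change (sale (nodeL d k) v && negb (sale (nodeR d k) v)) with (contains v d k).
    destruct (contains v d k) eqn:G.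
    + pose proof (node_pot_child_contains d _ s Hd (contains_child_toward _ _ _ G)) as E.
      rewrite div2_child_toward in E. lia.
    + pose proof (node_pot_parent_not_contains d k s ltac:(lia) Hk G). lia.
Qed.

Lemma pot_drift_NCheckR d k b s : (d < depth T)%nat -> (k < 2 ^ d)%nat ->
  pot_drift (mkState d k (NCheckR b) s).
Proof.
  intros Hd Hk sigma. unfold step, price, to_parent; cbn [st_d st_k st_ph st_s].
  destruct (node_pot_parent d k s) as [P1 P2]; [lia | exact Hk |].
  destruct (node_pot_child d (child_toward v d k) s Hd) as [C1 C2].
  rewrite div2_child_toward in C1, C2.
  split.
  - destruct (b && passR _ sigma); bound_enter; unfold pot; cbn [st_d st_k st_ph st_s];
      destruct (b && negb _); lia.
  - intros ->. rewrite passR_truthful by apply Hv.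
    destruct (b && negb _) eqn:E; bound_enter; unfold pot; cbn [st_d st_k st_ph st_s];
      rewrite E; lia.
Qed.

Lemma pot_drift_NMid d k s : (d < depth T)%nat -> pot_drift (mkState d k NMid s).
Proof.
  intros Hd sigma. unfold step, price; cbn [st_d st_k st_ph st_s].
  pose proof (proj2 (node_pot_child d (2 * k + 1) s Hd)) as C1.
  pose proof (proj2 (node_pot_child d (2 * k) s Hd)) as C0.
  pose proof (proj1 (node_pot_child d (child_toward v d k) s Hd)) as Ct.
  rewrite div2_double_succ in C1. rewrite Nat.div2_double in C0.
  rewrite div2_child_toward in Ct.
  split.
  - destruct sigma; bound_enter; unfold pot; cbn [st_d st_k st_ph st_s]; lia.
  - intros ->.
    replace (if sale (nodeM d k) v then _ else _) with (enter T C (S d) (child_toward v d k) s)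
      by (unfold child_toward; destruct (sale _ _); reflexivity).
    bound_enter. unfold pot; cbn [st_d st_k st_ph st_s]. lia.
Qed.

Lemma pot_drift_LCheckL k s : (k < 2 ^ depth T)%nat -> (s k <= C)%nat ->
  pot_drift (mkState (depth T) k LCheckL s).
Proof.
  intros Hk Hs sigma. unfold step, price, pot; cbn [st_d st_k st_ph st_s].
  destruct (node_pot_parent (depth T) k s) as [P1 P2]; [lia | exact Hk |].
  split.
  - destruct (_ && _); [destruct (sale _ _)|]; lia.
  - intros ->. rewrite passL_truthful by apply Hv.
    destruct (contains v (depth T) k) eqn:G.
    + pose proof G as G'. unfold contains in G'. rewrite G'.
      apply andb_prop in G' as [-> _].
      pose proof (contains_unique _ _ _ _ G Hkg) as ->.
      unfold node_pot. lia.
    + pose proof (node_pot_parent_not_contains (depth T) k s ltac:(lia) Hk G).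
      unfold contains in G. rewrite G. lia.
Qed.

Lemma pot_drift_LCheckR k b s : (k < 2 ^ depth T)%nat -> (s k <= C)%nat ->
  pot_drift (mkState (depth T) k (LCheckR b) s).
Proof.
  intros Hk Hs sigma. unfold step, price, to_parent; cbn [st_d st_k st_ph st_s].
  destruct (node_pot_parent (depth T) k s) as [P1 P2]; [lia | exact Hk |].
  pose proof (node_pot_incr (depth T) k s) as I.
  split.
  - destruct (b && passR _ sigma); bound_enter; unfold pot; cbn [st_d st_k st_ph st_s];
      destruct (b && negb _); try destruct (sale _ _); lia.
  - intros ->. rewrite passR_truthful by apply Hv.
    destruct (b && negb (sale (nodeR (depth T) k) v)) eqn:E;
      bound_enter; unfold pot; cbn [st_d st_k st_ph st_s]; rewrite E; [|lia].
    apply andb_prop in E as [_ E].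
    destruct (sale (nodeL (depth T) k) v) eqn:L.
    + assert (G : contains v (depth T) k = true) by (unfold contains; rewrite L, E; reflexivity).
      pose proof (contains_unique _ _ _ _ G Hkg) as ->.
      pose proof (node_pot_incr_target (depth T) s Hs). unfold node_pot in *. lia.
    + assert (k <> kg).
      { intros ->. unfold contains in Hkg. rewrite L in Hkg. discriminate. }
      rewrite node_pot_incr_other in * by assumption. lia.
Qed.

Lemma pot_drift_step st : wf_state st -> st_ph st <> LCommit -> pot_drift st.
Proof.
  destruct st as [d k ph s]. intros [Hk Hph] Hc; cbn [st_d st_k st_ph st_s] in *.
  destruct ph.
  - apply pot_drift_NCheckL; assumption.
  - apply pot_drift_NCheckR; assumption.
  - apply pot_drift_NMid; assumption.
  - destruct Hph as [-> Hs]. apply pot_drift_LCheckL; assumption.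
  - destruct Hph as [-> Hs]. apply pot_drift_LCheckR; assumption.
  - congruence.
Qed.


(* The check of leaf j passed its query at L although v < L: this corruption is already
   counted, but s_j is incremented only when the check completes. *)
Definition pending (st : state) (j : nat) : nat :=
  match st_ph st with
  | LCheckR true =>
      if Nat.eqb (st_k st) j && negb (sale (nodeL (st_d st) j) v) then 1 else 0
  | _ => 0
  end%nat.

Lemma pending_enter d k s j : pending (enter T C d k s) j = 0%nat.
Proof. unfold enter. destruct (Nat.ltb d (depth T)); [|destruct (Nat.leb (s k) C)]; reflexivity. Qed.

Lemma counters_step st sigma j : wf_state st -> j <> kg ->
  (st_s (step T C st sigma) j + pending (step T C st sigma) j <=
   st_s st j + pending st j + Nat.b2n (corrupted v (price st, sigma)))%nat.
Proof.
  destruct st as [d k ph s]. intros [Hk Hph] Hj; cbn [st_d st_k st_ph st_s] in *.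
  destruct ph as [| b | | | b |]; unfold step, to_parent, price; cbn [st_d st_k st_ph st_s].
  - unfold pending; simpl; lia.
  - destruct (_ && _); [unfold pending; simpl; lia | rewrite enter_counters, pending_enter; lia].
  - destruct sigma; rewrite enter_counters, pending_enter; lia.
  - unfold pending, corrupted; cbn [st_d st_k st_ph st_s fst snd].
    destruct (passL _ sigma) eqn:EP; [|lia].
    destruct (Nat.eqb_spec k j) as [<-|]; [|simpl; lia].
    destruct (sale_spec (nodeL d k) v) as [|L]; [simpl; lia|].
    assert (Hk0 : k <> 0%nat) by (intros ->; rewrite nodeL_first in L; lra).
    unfold passL in EP; cbn [st_k] in EP. apply Nat.eqb_neq in Hk0. rewrite Hk0 in EP.
    simpl in EP. subst sigma. simpl. lia.
  - destruct Hph as [Hd Hs].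
    destruct (b && passR _ sigma) eqn:EB; rewrite enter_counters, pending_enter; [|lia].
    unfold incr. destruct (Nat.eqb_spec j k) as [->|]; [|lia].
    apply andb_prop in EB as [-> EP]. unfold pending, corrupted; cbn [st_d st_k st_ph st_s fst snd].
    rewrite Nat.eqb_refl.
    destruct (sale_spec (nodeL d k) v) as [L|]; [|simpl; lia].
    assert (R : nodeR d k <= v).
    { destruct (Rle_dec (nodeR d k) v) as [|NR]; [assumption|]. exfalso. apply Hj.
      subst d. apply (contains_unique v (depth T)); [apply contains_iff; lra | exact Hkg]. }
    unfold passR in EP; cbn [st_k st_d] in EP.
    destruct (Nat.eqb_spec (S k) (2 ^ d)) as [E|]; [rewrite (nodeR_last d k E) in R; lra|].
    destruct sigma; [discriminate|].
    destruct (sale_spec (nodeR d k) v); [simpl; lia | lra].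
  - lia.
Qed.

Definition run_inv (n : nat) (st : state) (h : list (R * bool)) : Prop :=
  wf_state st /\
  (forall j, j <> kg -> (st_s st j + pending st j <= corr v h)%nat) /\
  loss v h + INR (pot st) <=
    INR (node_pot 0 0 (fun _ => 0%nat)) + 6 * INR (corr v h) + INR n / 2 ^ depth T.

Lemma run_inv_init : run_inv 0 (init_state T C) nil.
Proof.
  unfold init_state. split; [apply wf_enter; simpl; lia|]. split.
  - intros j _. rewrite enter_counters, pending_enter. simpl. lia.
  - pose proof (le_INR _ _ (pot_enter 0 0 (fun _ => 0%nat))).
    unfold loss, corr, Rdiv; simpl. lra.
Qed.

Lemma phase_eq_dec (p q : phase) : {p = q} + {p <> q}.
Proof. decide equality; apply bool_dec. Qed.

Lemma step_LCommit st sigma : st_ph st = LCommit -> step T C st sigma = st.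
Proof. destruct st as [d k ph s]. cbn [st_ph]. intros ->. reflexivity. Qed.

Lemma round_loss_LCommit st h : wf_state st -> st_ph st = LCommit ->
  (forall j, j <> kg -> (st_s st j <= corr v h)%nat) -> (corr v h <= C)%nat ->
  round_loss v (price st) <= / 2 ^ depth T.
Proof.
  destruct st as [d k ph s]. intros [Hk Hph] E Hcnt HC; cbn [st_d st_k st_ph st_s] in *.
  subst ph. destruct Hph as [-> Hs].
  assert (k = kg) as ->.
  { destruct (Nat.eq_dec k kg) as [|Ne]; [assumption|]. specialize (Hcnt k Ne). lia. }
  apply contains_iff in Hkg. pose proof (nodeR_sub_nodeL (depth T) kg).
  unfold round_loss, price; cbn [st_d st_k st_ph].
  destruct (sale_spec (nodeL (depth T) kg) v); lra.
Qed.

Lemma round_loss_le_1 p : 0 <= p -> round_loss v p <= 1.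
Proof. intros. unfold round_loss. destruct (sale p v); lra. Qed.

Lemma round_loss_pot_step st sigma : wf_state st -> st_ph st <> LCommit ->
  round_loss v (price st) + INR (pot (step T C st sigma)) <=
  INR (pot st) + 6 * INR (Nat.b2n (corrupted v (price st, sigma))).
Proof.
  intros Hwf Hc. destruct (pot_drift_step st Hwf Hc sigma) as [Hup Hdown].
  pose proof (round_loss_le_1 _ (price_nonneg st)).
  unfold corrupted; cbn [fst snd].
  destruct (Bool.eqb_spec sigma (sale (price st) v)) as [E|_]; simpl Nat.b2n.
  - apply le_INR in Hdown; [|exact E]. rewrite plus_INR in Hdown. simpl INR in *. lra.
  - apply le_INR in Hup. rewrite plus_INR in Hup. simpl INR in *. lra.
Qed.

Lemma run_inv_step n st h sigma :
  (corr v ((price st, sigma) :: h) <= C)%nat ->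
  run_inv n st h -> run_inv (S n) (step T C st sigma) ((price st, sigma) :: h).
Proof.
  intros HC [Hwf [Hcnt Hloss]]. unfold run_inv. rewrite corr_cons in HC |- *.
  split; [apply wf_step, Hwf|]. split.
  - intros j Hj. pose proof (counters_step st sigma j Hwf Hj). specialize (Hcnt j Hj). lia.
  - change (loss v ((price st, sigma) :: h)) with (round_loss v (price st) + loss v h).
    rewrite plus_INR, S_INR. unfold Rdiv in *. rewrite Rmult_plus_distr_r, Rmult_1_l.
    pose proof (Rinv_0_lt_compat _ (pow2_pos (depth T))).
    pose proof (pos_INR (Nat.b2n (corrupted v (price st, sigma)))).
    destruct (phase_eq_dec (st_ph st) LCommit) as [E|E].
    + rewrite step_LCommit by exact E.
      assert (Hs : forall j, j <> kg -> (st_s st j <= corr v h)%nat)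
        by (intros j Hj; specialize (Hcnt j Hj); lia).
      pose proof (round_loss_LCommit st h Hwf E Hs ltac:(lia)). lra.
    + pose proof (round_loss_pot_step st sigma Hwf E). lra.
Qed.

Lemma run_inv_holds adv n st h :
  run T C adv n = (st, h) -> (corr v h <= C)%nat -> run_inv n st h.
Proof.
  revert st h. induction n as [|n IH]; intros st h Hrun HC; simpl in Hrun.
  - injection Hrun as <- <-. apply run_inv_init.
  - destruct (run T C adv n) as [st0 h0]. injection Hrun as <- <-.
    apply run_inv_step; [exact HC|]. apply IH; [reflexivity|].
    rewrite corr_cons in HC. lia.
Qed.

End Potential.

Lemma run_history_length T C adv n : length (snd (run T C adv n)) = n.
Proof.
  induction n as [|n IH]; simpl; [reflexivity|].
  destruct (run T C adv n) as [st h]. simpl in *. rewrite IH. reflexivity.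
Qed.

Lemma regret_eq_loss T C v adv : regret T C v adv = loss v (history T C adv).
Proof.
  unfold regret, revenue. rewrite <- (run_history_length T C adv T) at 1. fold (history T C adv).
  induction (history T C adv) as [|[p sigma] h IH]; simpl length; simpl fold_right.
  - simpl. ring.
  - change (loss v ((p, sigma) :: h)) with (round_loss v p + loss v h).
    rewrite S_INR. unfold round_loss. simpl fst. lra.
Qed.

Lemma node_pot_root T C v kg : node_pot T C v kg 0 0 (fun _ => 0%nat) = (3 * depth T + 2 * C + 2)%nat.
Proof. unfold node_pot. simpl climb. lia. Qed.

Lemma ln2_pos : 0 < ln 2.
Proof. rewrite <- ln_1. apply ln_increasing; lra. Qed.

Lemma log2R_ge_1 T : (2 <= T)%nat -> 1 <= log2R (INR T).
Proof.
  intros HT. apply le_INR in HT. simpl INR in HT. pose proof ln2_pos.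
  unfold log2R. apply Rmult_le_reg_r with (ln 2); [assumption|].
  unfold Rdiv. rewrite Rmult_assoc, Rinv_l, Rmult_1_l, Rmult_1_r by lra.
  destruct (Req_dec (INR T) 2) as [->|Ne]; [lra|]. left. apply ln_increasing; lra.
Qed.

Lemma depth_lt_log2R_succ T : (2 <= T)%nat -> INR (depth T) < log2R (INR T) + 1.
Proof.
  intros HT. destruct (Nat.log2_up_spec T ltac:(lia)) as [Hlt _]. unfold depth.
  destruct (Nat.log2_up T) as [|D]; [pose proof (log2R_ge_1 T HT); simpl; lra|].
  simpl Nat.pred in Hlt. apply lt_INR in Hlt. rewrite INR_pow2 in Hlt.
  pose proof ln2_pos. rewrite S_INR. apply Rplus_lt_compat_r.
  unfold log2R. apply Rmult_lt_reg_r with (ln 2); [assumption|].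
  unfold Rdiv. rewrite Rmult_assoc, Rinv_l, Rmult_1_r by lra.
  rewrite <- ln_pow by lra. apply ln_increasing; [apply pow2_pos | exact Hlt].
Qed.

Lemma horizon_le_pow_depth T : (1 <= T)%nat -> INR T / 2 ^ depth T <= 1.
Proof.
  intros HT. pose proof (pow2_pos (depth T)).
  assert (Hle : INR T <= 2 ^ depth T).
  { rewrite <- INR_pow2. apply le_INR. unfold depth.
    destruct (Nat.eq_dec T 1) as [->|]; [simpl; lia|].
    apply Nat.log2_up_spec. lia. }
  apply Rmult_le_reg_r with (2 ^ depth T); [assumption|].
  unfold Rdiv. rewrite Rmult_assoc, Rinv_l by lra. lra.
Qed.

Theorem theorem4p3 :
  exists K : R, 0 < K /\
    forall (T C : nat) (v : R) (adv : adversary),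
      (2 <= T)%nat ->
      0 <= v < 1 ->
      (corruptions T C v adv <= C)%nat ->
      regret T C v adv <= K * (INR C + log2R (INR T)).
Proof.
  exists 9. split; [lra|]. intros T C v adv HT Hv Hc.
  destruct (exists_containing_node v Hv (depth T)) as [kg [_ Hkg]].
  destruct (run T C adv T) as [st h] eqn:Erun.
  assert (Hh : history T C adv = h) by (unfold history; rewrite Erun; reflexivity).
  change (corruptions T C v adv) with (corr v (history T C adv)) in Hc. rewrite Hh in Hc.
  destruct (run_inv_holds T C v kg Hv Hkg adv T st h Erun Hc) as [_ [_ Hloss]].
  rewrite node_pot_root in Hloss.
  rewrite regret_eq_loss, Hh.
  pose proof (le_INR _ _ Hc). pose proof (pos_INR (pot T C v kg st)). pose proof (pos_INR C).
  pose proof (horizon_le_pow_depth T ltac:(lia)).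
  pose proof (log2R_ge_1 T HT). pose proof (depth_lt_log2R_succ T HT).
  rewrite !plus_INR, !mult_INR in Hloss. simpl INR in Hloss. lra.
Qed.
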